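(* Let $K\in\mathbb{N}$, $\mathcal{X}=[0,1]^K$, and let $p,q$ be two probability density functions supported on $\mathcal{X}$ with finite differential entropies $h(p),h(q)$. Let $\varepsilon,A>0$ and assume that for all $\mathbf{x}\in\mathcal{X}$ we have $|p(\mathbf{x})-q(\mathbf{x})|\le\varepsilon$ and $0\le p(\mathbf{x})\le A$, and that $\frac{\varepsilon}{A}\le\alpha$, where $\alpha:=\frac{\sqrt{e^2+4}-e}{2e}$. Then \[ |h(p)-h(q)|\le\varepsilon\log\frac{A}{\varepsilon}. \]
   Context: $h(p)=-\int p\log p\,\mathrm{d}\lambda^K$ denotes differential entropy. *)

From HB Require Import structures.
From mathcomp Require Import all_boot all_order all_algebra.
From mathcomp Require Import all_classical all_reals all_analysis.
Set Implicit Arguments. Unset Strict Implicit. Unset Printing Implicit Defensive.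
Import Order.TTheory GRing.Theory Num.Theory.
Local Open Scope classical_set_scope.
Local Open Scope ring_scope.

(* Points of R^K are K-tuples of reals, with the product (coordinate)
   sigma-algebra of the Borel sigma-algebra of R provided by mathcomp-analysis. *)

Definition cube (R : realType) (K : nat) : set (K.-tuple R) :=
  [set x | forall i : 'I_K, 0 <= tnth x i <= 1].
Arguments cube R K : clear implicits.

(* mu is K-dimensional Lebesgue measure: it gives every closed box its volume.
   (Closed boxes form a generating pi-system of the product Borel sigma-algebra
   and R^K is sigma-finite for such a measure, so this characterizes mu.) *)
Definition is_lebesgueK (R : realType) (K : nat)
  (mu : {measure set (K.-tuple R) -> \bar R}) : Prop :=
  forall a b : 'I_K -> R, (forall i, a i <= b i) ->
    mu [set x | forall i : 'I_K, a i <= tnth x i <= b i]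
    = (\prod_(i < K) (b i - a i))%:E.

Definition density_on_cube (R : realType) (K : nat)
  (mu : {measure set (K.-tuple R) -> \bar R}) (p : K.-tuple R -> R) : Prop :=
  [/\ measurable_fun setT p,
      (forall x, 0 <= p x),
      (forall x, ~ cube R K x -> p x = 0) &
      (\int[mu]_x (p x)%:E = 1)%E].

(* the entropy integrand p log p (with ln 0 = 0, i.e. 0 log 0 = 0) *)
Definition plogp (R : realType) (K : nat) (p : K.-tuple R -> R) :=
  fun x => p x * ln (p x).

Definition finite_entropy (R : realType) (K : nat)
  (mu : {measure set (K.-tuple R) -> \bar R}) (p : K.-tuple R -> R) : Prop :=
  mu.-integrable setT (fun x => (plogp p x)%:E).

Definition diff_entropy (R : realType) (K : nat)
  (mu : {measure set (K.-tuple R) -> \bar R}) (p : K.-tuple R -> R) : R :=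
  - Rintegral mu setT (plogp p).

Definition alpha_const (R : realType) : R :=
  (Num.sqrt (expR 1 ^+ 2 + 4) - expR 1) / (2 * expR 1).
Arguments alpha_const R : clear implicits.

(* Write g t = t ln t. As p and q both integrate to 1,
   h(p) - h(q) = \int (g q - g p - ln A (q - p)), and the integrand vanishes
   off the cube. Rescaling by A, it equals A (g (q/A) - g (p/A)) with
   p/A in [0, 1] and |q/A - p/A| <= r := eps/A. The choice of alpha gives
   1 + r <= - ln r, under which the tangent lines and the superadditivity of
   g yield |g v - g u| <= - g r; integrating over the unit cube, of volume 1,
   bounds |h(p) - h(q)| by A (- g r) = eps ln (A / eps). *)

From HB Require Import structures.
From mathcomp Require Import all_boot all_order all_algebra.
From mathcomp Require Import all_classical all_reals all_analysis.
From mathcomp Require Import ring lra measurable_realfun.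
Set Implicit Arguments. Unset Strict Implicit. Unset Printing Implicit Defensive.
Import Order.TTheory GRing.Theory Num.Theory.
Local Open Scope classical_set_scope.
Local Open Scope ring_scope.

Section xlnx.
Variable R : realType.
Implicit Types a b r s t u v A eps : R.

Definition xlnx t := t * ln t.

Lemma xlnx_ge_tangent s t : 0 <= s -> 0 < t -> s * ln t + s - t <= xlnx s.
Proof.
rewrite /xlnx le_eqVlt => /predU1P[<-|s0] t0.
  by rewrite !mul0r add0r sub0r oppr_le0 ltW.
have ts0 : 0 < t / s by rewrite divr_gt0.
have := le_ln1Dx (x := t / s - 1); rewrite (addrC 1) subrK ln_div ?posrE //.
move=> /(_ ltac:(lra)); rewrite -(ler_pM2l s0).
have -> : s * (t / s - 1) = t - s by field; rewrite gt_eqF.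
lra.
Qed.

Lemma xlnx_superadditive s t : 0 <= s -> 0 <= t ->
  xlnx s + xlnx t <= xlnx (s + t).
Proof.
move=> s0 t0; rewrite /xlnx mulrDl.
have [->|sn0] := eqVneq s 0; first by rewrite !mul0r !add0r.
have [->|tn0] := eqVneq t 0; first by rewrite !mul0r !addr0.
have sp : 0 < s by rewrite lt_def sn0 s0.
have tp : 0 < t by rewrite lt_def tn0 t0.
by apply: lerD; apply: ler_wpM2l => //; rewrite ler_ln ?posrE ?addr_gt0 //; lra.
Qed.

Lemma xlnx_sub_bounds r s t : 0 < r -> 1 + r <= - ln r ->
  0 <= s <= t -> t - s <= r -> t <= 1 + r ->
  xlnx r <= xlnx t - xlnx s <= - xlnx r.
Proof.
move=> r_gt0 r_small /andP[s0 st] tsr t1.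
have ts0 : 0 <= t - s by rewrite subr_ge0.
(* lower bound: superadditivity and the tangent at r; upper: the tangent at t *)
apply/andP; split.
  have := xlnx_superadditive s0 ts0; rewrite [s + _]addrC subrK.
  have := xlnx_ge_tangent ts0 r_gt0.
  have : 0 <= (r - (t - s)) * (- ln r - 1).
    by apply: mulr_ge0; rewrite subr_ge0; lra.
  rewrite /xlnx; lra.
have [tp|t0] := ltP 0 t; last first.
  have -> : t = 0 by lra.
  have -> : s = 0 by lra.
  rewrite subrr oppr_ge0 /xlnx pmulr_rle0 //; lra.
have := xlnx_ge_tangent s0 tp.
have := le_ln1Dx (x := t - 1); rewrite (addrC 1) subrK => /(_ ltac:(lra)).
rewrite /xlnx; nra.
Qed.

Lemma dist_xlnx_le r u v : 0 < r -> 1 + r <= - ln r ->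
  0 <= u <= 1 -> 0 <= v -> `|u - v| <= r -> `|xlnx v - xlnx u| <= - xlnx r.
Proof.
move=> r_gt0 r_small /andP[u0 u1] v0.
rewrite ler_norml ler_norml => /andP[uv1 uv2].
have bounds := xlnx_sub_bounds r_gt0 r_small.
have [uv|vu] := leP u v.
  by have /andP[] := bounds u v ltac:(lra) ltac:(lra) ltac:(lra); lra.
by have /andP[] := bounds v u ltac:(lra) ltac:(lra) ltac:(lra); lra.
Qed.

Lemma mul_xlnx_div b A : 0 <= b -> 0 < A ->
  A * xlnx (b / A) = xlnx b - ln A * b.
Proof.
rewrite le_eqVlt => /predU1P[<-|b0] A0.
  by rewrite /xlnx !(mul0r, mulr0) subrr.
by rewrite /xlnx ln_div ?posrE // mulrA mulrCA divff ?gt_eqF // mulr1; ring.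
Qed.

Lemma xlnx_linearized_bound a b eps A : 0 < eps -> 0 < A ->
  1 + eps / A <= - ln (eps / A) -> 0 <= a <= A -> 0 <= b -> `|a - b| <= eps ->
  `|xlnx b - xlnx a - ln A * (b - a)| <= eps * ln (A / eps).
Proof.
move=> eps0 A0 small /andP[a0 aA] b0 ab.
have r0 : 0 < eps / A by rewrite divr_gt0.
have scaled := dist_xlnx_le (u := a / A) (v := b / A) r0 small.
have -> : xlnx b - xlnx a - ln A * (b - a) = A * (xlnx (b / A) - xlnx (a / A)).
  by rewrite [RHS]mulrBr !mul_xlnx_div //; ring.
have -> : eps * ln (A / eps) = A * - xlnx (eps / A).
  by rewrite /xlnx -invf_div lnV ?posrE //; field; rewrite gt_eqF.
rewrite normrM gtr0_norm // ler_pM2l //; apply: scaled.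
- by rewrite divr_ge0 ?(ltW A0) //= ler_pdivrMr // mul1r.
- by rewrite divr_ge0 // ltW.
- by rewrite -mulrBl normrM [`|A^-1|]gtr0_norm ?invr_gt0 // ler_pM2r ?invr_gt0.
Qed.

Lemma alpha_const_root : alpha_const R * (1 + alpha_const R) * expR 1 ^+ 2 = 1.
Proof.
rewrite /alpha_const; set e := expR 1; set S := Num.sqrt _.
have e0 : 0 < e by rewrite expR_gt0.
have S2 : S ^+ 2 = e ^+ 2 + 4 by rewrite sqr_sqrtr // addr_ge0 // sqr_ge0.
have -> : (S - e) / (2 * e) * (1 + (S - e) / (2 * e)) * e ^+ 2 =
          (S ^+ 2 - e ^+ 2) / 4.
  by field; rewrite gt_eqF.
by rewrite S2 addrC addKr divff.
Qed.

Lemma le_alpha_const_ln r : 0 < r -> r <= alpha_const R -> 1 + r <= - ln r.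
Proof.
move=> r0 ra; have a0 : 0 <= alpha_const R by lra.
have e1 : 1 <= expR 1 :> R by rewrite -expR0 ler_expR.
have e2 : 1 <= expR 1 ^+ 2 :> R by rewrite expr2; nra.
have quad : r * (1 + r) * expR 1 ^+ 2 <= 1.
  rewrite -[X in _ <= X]alpha_const_root ler_pM2r ?exprn_gt0 ?expR_gt0 //.
  by apply: ler_pM => //; lra.
have r1 : r <= 1 by nra.
have e_r : expR (r - 1) <= 1 by rewrite -[X in _ <= X]expR0 ler_expR; lra.
have e_r0 := expR_gt0 (r - 1).
rewrite -lnV ?posrE // -ler_expR lnK ?posrE ?invr_gt0 //.
rewrite -(ler_pM2l r0) mulfV ?gt_eqF //.
have -> : expR (1 + r) = expR 1 ^+ 2 * expR (r - 1).
  by rewrite -expRM_natl -expRD; congr expR; ring.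
nra.
Qed.

End xlnx.

Section integral_bound.
Context d (T : measurableType d) (R : realType) (mu : {measure set T -> \bar R}).

Lemma integrable_EFinB (f g : T -> R) :
  mu.-integrable setT (EFin \o f) -> mu.-integrable setT (EFin \o g) ->
  mu.-integrable setT (EFin \o (fun x => f x - g x)).
Proof.
by move=> intf intg; apply: eq_integrable (integrableB measurableT intf intg).
Qed.

Lemma integrable_EFinZl (k : R) (f : T -> R) :
  mu.-integrable setT (EFin \o f) ->
  mu.-integrable setT (EFin \o (fun x => k * f x)).
Proof.
by move=> intf; apply: eq_integrable (integrableZl measurableT k intf).
Qed.

Lemma normr_Rintegral_le (D : set T) (F : T -> R) (B : R) :
  measurable D -> (mu D < +oo)%E -> mu.-integrable setT (EFin \o F) ->
  (forall x, ~ D x -> F x = 0) -> (forall x, D x -> `|F x| <= B) ->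
  `|\int[mu]_x F x| <= B * fine (mu D).
Proof.
move=> mD muD intF F0 FB.
apply: le_trans (le_normr_Rintegral measurableT intF) _.
have -> : \int[mu]_x `|F x| = \int[mu]_(x in D) `|F x|.
  rewrite [RHS]Rintegral_mkcond; apply: eq_Rintegral => x _; rewrite /patch.
  by case: ifPn => // /negP xD; rewrite F0 ?normr0 // => /mem_set.
have intD : mu.-integrable D (EFin \o F).
  exact: integrableS measurableT mD (@subsetT _ _) intF.
have intB : mu.-integrable D (EFin \o cst B).
  apply/integrableP; split; first exact/measurable_EFinP/measurable_cst.
  by rewrite (eq_integral (cst `|B|%:E)) // integral_cst // lte_mul_pinfty.
rewrite -Rintegral_cst //.
by apply: le_Rintegral => //; exact: integrable_norm.
Qed.

End integral_bound.

Section cube_entropy.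
Variables (R : realType) (K : nat) (mu : {measure set (K.-tuple R) -> \bar R}).

Lemma measurable_cube : measurable (cube R K).
Proof.
have -> : cube R K =
    \bigcap_(i in [set: 'I_K]) ((@tnth K R)^~ i @^-1` `[0, 1]%classic).
  apply/seteqP; split => x /= cx i; last by have := cx i I; rewrite /= in_itv.
  by move=> _ /=; rewrite in_itv /= cx.
apply: fin_bigcap_measurable; first exact: finite_finset.
by move=> i _; rewrite -[X in measurable X]setTI; exact: measurable_tnth.
Qed.

Lemma lebesgueK_cube : is_lebesgueK mu -> mu (cube R K) = 1%E.
Proof.
move=> leb; rewrite /cube (leb (fun=> 0) (fun=> 1)) => [|i]; last exact: ler01.
by rewrite big1 // => i _; rewrite subr0.
Qed.

Lemma density_on_cube_integrable p : density_on_cube mu p ->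
  mu.-integrable setT (EFin \o p).
Proof.
case=> mp p0 _ int1; apply/integrableP; split; first exact/measurable_EFinP.
under eq_integral do rewrite gee0_abs ?lee_fin //.
by rewrite int1 ltry.
Qed.

Lemma density_on_cube_Rintegral p : density_on_cube mu p -> \int[mu]_x p x = 1.
Proof. by case=> _ _ _ int1; rewrite /Rintegral int1. Qed.

Lemma diff_entropy_subE (p q : K.-tuple R -> R) (c : R) :
  mu.-integrable setT (EFin \o p) -> mu.-integrable setT (EFin \o q) ->
  \int[mu]_x p x = \int[mu]_x q x ->
  finite_entropy mu p -> finite_entropy mu q ->
  diff_entropy mu p - diff_entropy mu q =
  \int[mu]_x (plogp q x - plogp p x - c * (q x - p x)).
Proof.
move=> intp intq pq Ep Eq; have intqp := integrable_EFinB intq intp.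
rewrite RintegralB //; [|exact: integrable_EFinB|exact: integrable_EFinZl].
rewrite RintegralB // RintegralZl // RintegralB // pq subrr mulr0 subr0.
by rewrite /diff_entropy opprK addrC.
Qed.

End cube_entropy.

Theorem lemma6 (R : realType) (K : nat)
  (mu : {measure set (K.-tuple R) -> \bar R})
  (p q : K.-tuple R -> R) (eps A : R) :
  is_lebesgueK mu ->
  density_on_cube mu p -> density_on_cube mu q ->
  finite_entropy mu p -> finite_entropy mu q ->
  0 < eps -> 0 < A ->
  (forall x, cube R K x -> `|p x - q x| <= eps) ->
  (forall x, cube R K x -> 0 <= p x <= A) ->
  eps / A <= alpha_const R ->
  `|diff_entropy mu p - diff_entropy mu q| <= eps * ln (A / eps).
Proof.
move=> leb Dp Dq Ep Eq eps0 A0 pq pA small.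
have intp := density_on_cube_integrable Dp.
have intq := density_on_cube_integrable Dq.
rewrite (diff_entropy_subE (ln A) intp intq) //; last first.
  by rewrite !density_on_cube_Rintegral.
have -> : eps * ln (A / eps) = eps * ln (A / eps) * fine (mu (cube R K)).
  by rewrite lebesgueK_cube // mulr1.
set F := fun x => _ - _ - _.
apply: (normr_Rintegral_le (D := cube R K) (F := F)).
- exact: measurable_cube.
- by rewrite lebesgueK_cube // ltry.
- exact: integrable_EFinB (integrable_EFinB Eq Ep)
    (integrable_EFinZl (ln A) (integrable_EFinB intq intp)).
- case: Dp Dq => _ _ p0 _ [_ _ q0 _] x /[dup] /p0 px0 /q0 qx0.
  by rewrite /F /plogp px0 qx0 !(mul0r, mulr0, subr0).
- have eps_small := le_alpha_const_ln (divr_gt0 eps0 A0) small.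
  case: Dq => _ q0 _ _ x cx.
  exact: xlnx_linearized_bound eps0 A0 eps_small (pA x cx) (q0 x) (pq x cx).
Qed.
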